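(* Let $n\ge 2$ and $1\le k\le n-1$. The automaton $\mathcal{CB}_{n,k}$ has a reset word of length at most $4n\lceil\log_2 n\rceil$.
   Context: A deterministic finite automaton (DFA) is a triple $\langle Q,\Sigma,\delta\rangle$ with $Q$ a finite set of states, $\Sigma$ a finite alphabet and $\delta\colon Q\times\Sigma\to Q$. Words act on states from left to right: $q\cdot(a_1a_2\cdots a_\ell)=(\cdots((q\cdot a_1)\cdot a_2)\cdots)\cdot a_\ell$, where $q\cdot a=\delta(q,a)$; for $P\subseteq Q$, $P\cdot w=\{p\cdot w\mid p\in P\}$. A word $w$ is a reset (synchronizing) word if $|Q\cdot w|=1$. The automaton $\mathcal{CB}_{n,k}$ has states $q_1,\dots,q_n$ and letters $a,b,c$: $a$ acts as the cyclic permutation $q_i\mapsto q_{i+1}$ for $i<n$ and $q_n\mapsto q_1$; $b$ maps $q_1$ to $q_2$ and fixes all other states; $c$ swaps $q_k$ and $q_{k+1}$ and fixes all other states. *)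

From mathcomp Require Import all_boot.
Unset Printing Implicit Defensive.

Inductive letter := La | Lb | Lc.

(* States q_1..q_n are encoded as 'I_n: q_i is the ordinal with value i-1. *)
Definition cb_step_nat (n k : nat) (x : letter) (i : nat) : nat :=
  match x with
  | La => (i.+1) %% n
  | Lb => if i == 0 then 1 else i
  | Lc => if i == k.-1 then k              (* swap q_k and q_{k+1} *)
          else if i == k then k.-1 else i
  end.

(* delta : Q x Sigma -> Q.  For n >= 2 and 1 <= k <= n-1 the value
   cb_step_nat n k x q always lies in 'I_n, so insubd (with an irrelevant
   default q) just returns that ordinal. *)
Definition cb_delta (n k : nat) (q : 'I_n) (x : letter) : 'I_n :=
  insubd q (cb_step_nat n k x q).

Definition cb_act (n k : nat) (q : 'I_n) (w : seq letter) : 'I_n :=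
  foldl (cb_delta n k) q w.

Definition cb_image (n k : nat) (w : seq letter) : {set 'I_n} :=
  [set cb_act n k q w | q : 'I_n].

Definition is_reset_word (n k : nat) (w : seq letter) : Prop :=
  #|cb_image n k w| = 1.

From mathcomp Require Import all_boot all_algebra.
From mathcomp Require Import ring zify.
Import GRing.Theory.

Set Implicit Arguments.
Unset Strict Implicit.

(* Follow the states in the frame that rotates with a: after t letters a, the
   state q has coordinate z = k + t - q (mod n).  In this frame a fixes every
   coordinate, c read at time t exchanges the coordinates t and t + 1, and b
   read at time t moves the coordinate k + t to k + t - 1.  Let
   x_0 < ... < x_(m-1) be the occupied coordinates.  A round lasts 2n time
   steps: c is read at the times x_(2i), ..., x_(2i+1) - 2, carrying the token
   at x_(2i) up to x_(2i+1) - 1, and b is read at time x_(2i+1) + n - k,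
   moving the token at x_(2i+1) down onto it.  The c-times and the b-times
   shifted back by n - k are distinct coordinates in [0, n), so a round costs
   at most 3n letters and leaves ceil(m/2) occupied states; after
   ceil(log2 n) rounds a single state is left. *)

Lemma cb_act_cat n k q w1 w2 :
  cb_act n k q (w1 ++ w2) = cb_act n k (cb_act n k q w1) w2.
Proof. by rewrite /cb_act foldl_cat. Qed.

Lemma iter_uphalf_le1 r m : m <= 2 ^ r -> iter r uphalf m <= 1.
Proof.
elim: r m => [//|r IHr] m hm.
by rewrite iterSr; apply: IHr; rewrite leq_uphalf_double -mul2n -expnS.
Qed.

Lemma sum_bool_trunc (f : nat -> bool) n T :
  (forall t, f t -> t < n) -> n <= T -> \sum_(t < T) f t = \sum_(t < n) f t.
Proof.
move=> f_lt leT; rewrite -(subnKC leT) big_split_ord /= [X in _ + X]big1 ?addn0 //.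
by move=> t _; case ft: (f _) => //; have := f_lt _ ft; lia.
Qed.

Lemma addrKB_eq (V : zmodType) (a b c : V) : (a + b - c == b)%R = (c == a).
Proof. by rewrite GRing.subr_eq [(b + c)%R]addrC (inj_eq (addIr b)) eq_sym. Qed.

Lemma half_cases l : exists j, l = 2 * j \/ l = (2 * j).+1.
Proof.
exists l./2; have := odd_double_half l; rewrite -mul2n.
by case: (odd l) => /= e; [right|left]; lia.
Qed.

Section CernyBinary.
Variables (n k : nat).
Local Notation N := n.+2.
Hypotheses (k_gt0 : 0 < k) (k_ltN : k < N).
Local Open Scope ring_scope.

Let K : 'Z_N := k%:R.

Lemma eq_natZ a b : (a < N)%N -> (b < N)%N -> ((a%:R : 'Z_N) == b%:R) = (a == b).
Proof.
move=> ha hb; apply/eqP/eqP => [/(congr1 val)|->//].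
by rewrite /= !val_Zp_nat // !modn_small.
Qed.

Lemma K_add_shift a : K + (a + N - k)%:R = a%:R.
Proof.
rewrite -natrD (_ : k + (a + N - k) = a + N)%N; last by lia.
by rewrite natrD pchar_Zp // addr0.
Qed.

Lemma cb_delta_a q : cb_delta N k q La = q + 1.
Proof.
apply: val_inj; rewrite /cb_delta val_insubd /= ltn_pmod //.
by rewrite -addn1 [(1 %% _)%N]modn_small.
Qed.

Lemma cb_delta_b q : cb_delta N k q Lb = if q == 0 then 1 else q.
Proof.
apply: val_inj; rewrite /cb_delta val_insubd /= -val_eqE /=.
by case: eqP => _ /=; rewrite ?ltn_ord // modn_small.
Qed.

Lemma cb_delta_c q :
  cb_delta N k q Lc = if q == K - 1 then K else if q == K then K - 1 else q.
Proof.
have valK : val K = k by rewrite /= val_Zp_nat // modn_small.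
have valK1 : val (K - 1) = k.-1.
  rewrite /K -(prednK k_gt0) mulrSr addrK /= val_Zp_nat // modn_small //; lia.
apply: val_inj; rewrite /cb_delta val_insubd /= -!val_eqE valK valK1.
case: eqP => _; first by rewrite k_ltN valK.
case: eqP => _; last by rewrite ltn_ord.
by rewrite valK1 ifT //; lia.
Qed.

Definition is_a (x : letter) : bool := if x is La then true else false.

Definition frame_letter (t : nat) (x : letter) (z : 'Z_N) : 'Z_N :=
  match x with
  | La => z
  | Lb => if z == K + t%:R then z - 1 else z
  | Lc => if z == t%:R then z + 1 else if z == t%:R + 1 then z - 1 else z
  end.

Fixpoint frame (t : nat) (w : seq letter) (z : 'Z_N) : 'Z_N :=
  if w is x :: w' then frame (t + is_a x) w' (frame_letter t x z) else z.

Lemma cb_delta_frame t q z x : q + z = K + t%:R ->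
  cb_delta N k q x + frame_letter t x z = K + (t + is_a x)%:R.
Proof.
move=> qz; have -> : z = K + t%:R - q by rewrite -qz addrC addKr.
case: x => /=.
- by rewrite cb_delta_a addn1 -natr1; ring.
- rewrite cb_delta_b addn0 -[X in X - q == _]add0r addrKB_eq.
  by case: eqP => [->|_]; ring.
- have K1_neq_K : (K - 1 == K) = false.
    by rewrite -subr_eq0 addrAC subrr add0r oppr_eq0 oner_eq0.
  rewrite cb_delta_c addn0 addrKB_eq.
  rewrite (_ : K + t%:R = K - 1 + (t%:R + 1)) ?addrKB_eq; last by ring.
  by case: eqP => [->|_]; [rewrite K1_neq_K | case: eqP => [->|_]]; ring.
Qed.

Lemma cb_act_frame w t q z : q + z = K + t%:R ->
  cb_act N k q w + frame t w z = K + (t + count is_a w)%:R.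
Proof.
elim: w t q z => [|x w IHw] t q z qz /=; first by rewrite addn0.
by rewrite addnA; apply: IHw; apply: cb_delta_frame.
Qed.

Lemma frame_cat t w1 w2 z :
  frame t (w1 ++ w2) z = frame (t + count is_a w1) w2 (frame t w1 z).
Proof. by elim: w1 t z => [|x w1 IHw1] t z /=; rewrite ?addn0 // IHw1 addnA. Qed.

Definition block (c b : bool) : seq letter := nseq c Lc ++ nseq b Lb ++ [:: La].

Lemma count_a_block c b : count is_a (block c b) = 1%N.
Proof. by case: c; case: b. Qed.

Lemma frame_block_fix t (c b : bool) z :
  (c -> z != t%:R /\ z != t%:R + 1) -> (b -> z != K + t%:R) ->
  frame t (block c b) z = z.
Proof.
case: c => [/(_ isT) [/negbTE zt /negbTE zt1]|_]; case: b => [/(_ isT) /negbTE zb|_] //=;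
by rewrite ?addn0 ?zt ?zt1 ?zb.
Qed.

Lemma frame_block_ride t (b : bool) : (b -> t%:R + 1 != K + t%:R) ->
  frame t (block true b) t%:R = t.+1%:R.
Proof. by case: b => [/(_ isT) /negbTE tb|_] /=; rewrite eqxx ?addn0 ?tb natr1. Qed.

Lemma frame_block_merge t (c : bool) z : (c -> z != t%:R /\ z != t%:R + 1) ->
  z = K + t%:R -> frame t (block c true) z = z - 1.
Proof.
move=> hc zK; case: c hc => [/(_ isT) [/negbTE zt /negbTE zt1]|_] /=;
by rewrite ?addn0 ?zt ?zt1 -zK eqxx.
Qed.

Section Schedule.
Variables (cs bs : nat -> bool).

Definition sched_word (T : nat) : seq letter :=
  flatten [seq block (cs t) (bs t) | t <- iota 0 T].

Lemma sched_word_S T : sched_word T.+1 = sched_word T ++ block (cs T) (bs T).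
Proof. by rewrite /sched_word -addn1 iotaD map_cat flatten_cat /= cats0. Qed.

Lemma count_a_sched T : count is_a (sched_word T) = T.
Proof.
by elim: T => [//|T IHT]; rewrite sched_word_S count_cat IHT count_a_block addn1.
Qed.

Lemma size_sched_word T :
  size (sched_word T) = (T + \sum_(t < T) cs t + \sum_(t < T) bs t)%N.
Proof.
elim: T => [|T IHT]; first by rewrite !big_ord0.
rewrite sched_word_S !size_cat IHT !big_ord_recr !size_nseq /=; lia.
Qed.

Lemma frame_sched_S T z : frame 0 (sched_word T.+1) z =
  frame T (block (cs T) (bs T)) (frame 0 (sched_word T) z).
Proof. by rewrite sched_word_S frame_cat count_a_sched. Qed.

Lemma cb_act_sched T q z : q + z = K ->
  cb_act N k q (sched_word T) + frame 0 (sched_word T) z = K + T%:R.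
Proof.
by move=> qz; rewrite -[T in RHS]count_a_sched; apply: cb_act_frame; rewrite addr0.
Qed.

End Schedule.

Section Round.
Variables (m : nat) (x : nat -> nat).
Hypotheses (x_incr : forall l, (x l < x l.+1)%N) (x_last_ltN : (x m.-1 < N)%N).
Local Notation p := m./2.

Lemma ltn_pos i j : (x i < x j)%N = (i < j)%N.
Proof. exact/leqW_mono/leq_mono/(homo_ltn ltn_trans). Qed.

Lemma leq_pos i j : (x i <= x j)%N = (i <= j)%N.
Proof. exact/leq_mono/(homo_ltn ltn_trans). Qed.

Lemma pos_ltN l : (l < m)%N -> (x l < N)%N.
Proof. by move=> lm; apply: leq_ltn_trans x_last_ltN; rewrite leq_pos; lia. Qed.

Lemma pair_lt (i : 'I_p) : ((2 * i).+1 < m)%N.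
Proof. by have := ltn_ord i; have := odd_double_half m; rewrite -mul2n; lia. Qed.

Lemma pair_ltN (i : 'I_p) : (x (2 * i).+1 < N)%N.
Proof. exact/pos_ltN/pair_lt. Qed.

Definition ride_time t := [exists i : 'I_p, (x (2 * i) <= t) && (t.+2 <= x (2 * i).+1)]%N.
Definition merge_time t := [exists i : 'I_p, t == x (2 * i).+1 + N - k]%N.
Definition slot u := [exists i : 'I_p, u == x (2 * i).+1]%N.

Lemma ride_time_ltN t : ride_time t -> (t.+1 < N)%N.
Proof. by case/existsP => i /andP[_ ti]; have := pair_ltN i; lia. Qed.

Lemma slot_ltN u : slot u -> (u < N)%N.
Proof. by case/existsP => i /eqP ->; apply: pair_ltN. Qed.

Lemma merge_time_ge t : merge_time t -> (N - k <= t)%N.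
Proof. by case/existsP => i /eqP ->; lia. Qed.

Lemma merge_time_shift u : merge_time (N - k + u)%N = slot u.
Proof. by apply/existsP/existsP => -[i /eqP e]; exists i; apply/eqP; lia. Qed.

Lemma ride_time_slot t : ride_time t -> ~~ slot t.
Proof.
case/existsP => i /andP[h1 h2]; apply/existsP => -[j /eqP e].
by have := leq_pos (2 * i) (2 * j).+1; have := ltn_pos (2 * j).+1 (2 * i).+1; lia.
Qed.

(* The ride times and the merge times shifted back by N - k are disjoint
   subsets of [0, N). *)
Lemma sum_ride_merge :
  (\sum_(t < 2 * N) ride_time t + \sum_(t < 2 * N) merge_time t <= N)%N.
Proof.
rewrite (@sum_bool_trunc ride_time N); last 2 first.
- by move=> t /ride_time_ltN; lia.
- by lia.
rewrite (_ : 2 * N = N - k + (N + k))%N; last by lia.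
rewrite big_split_ord /= [X in (_ + (X + _))%N]big1 => [|t _]; last first.
  by case mt: (merge_time _) => //; have := merge_time_ge mt; have := ltn_ord t; lia.
rewrite (eq_bigr (fun u : 'I_(N + k) => nat_of_bool (slot u))) => [|u _];
  last by rewrite /= merge_time_shift.
rewrite add0n (@sum_bool_trunc slot N); last 2 first.
- exact: slot_ltN.
- by lia.
rewrite -big_split /= -[X in (_ <= X)%N]card_ord -sum1_card.
apply: leq_sum => t _; case rt: (ride_time t); last exact: leq_b1.
by rewrite (negbTE (ride_time_slot rt)).
Qed.

Definition round_word := sched_word ride_time merge_time (2 * N).

Definition round_step t := frame t (block (ride_time t) (merge_time t)).

Lemma size_round_word : (size round_word <= 3 * N)%N.
Proof. by rewrite size_sched_word -addnA; have := sum_ride_merge; lia. Qed.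

Lemma round_step_fix t y : (y < N)%N ->
  (ride_time t -> y != t /\ y != t.+1) ->
  (forall i : 'I_p, t = (x (2 * i).+1 + N - k)%N -> y != x (2 * i).+1) ->
  round_step t y%:R = y%:R.
Proof.
move=> yN hr hm; apply: frame_block_fix.
  by move=> /[dup] /ride_time_ltN tN /hr; rewrite natr1 !eq_natZ // ltnW.
by case/existsP => i /eqP ti; rewrite ti K_add_shift eq_natZ ?pair_ltN //; apply: hm.
Qed.

Lemma round_step_ride (j : 'I_p) t :
  (x (2 * j) <= t)%N -> (t.+2 <= x (2 * j).+1)%N -> round_step t t%:R = t.+1%:R.
Proof.
move=> h1 h2; have xN := pair_ltN j; rewrite /round_step.
have -> : ride_time t by apply/existsP; exists j; rewrite h1 h2.
apply: frame_block_ride; case/existsP => i /eqP ti.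
rewrite [in X in _ != X]ti K_add_shift natr1 eq_natZ ?pair_ltN //; last by lia.
apply/eqP => e; have := ltn_pos (2 * j) (2 * i).+1.
by have := ltn_pos (2 * i).+1 (2 * j).+1; lia.
Qed.

Lemma round_step_merge (j : 'I_p) (s := (x (2 * j).+1 + N - k)%N) :
  round_step s (x (2 * j).+1)%:R = (x (2 * j).+1).-1%:R.
Proof.
have xpos : (0 < x (2 * j).+1)%N by have := x_incr (2 * j); lia.
have xN := pair_ltN j; rewrite /round_step.
have -> : merge_time s by apply/existsP; exists j.
rewrite frame_block_merge.
- by rewrite -[in LHS](prednK xpos) -natr1 addrK.
- move=> /ride_time_ltN sN; rewrite natr1 !eq_natZ ?(ltnW sN) //.
  by rewrite /s; split; apply/eqP; lia.
- by rewrite K_add_shift.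
Qed.

(* The coordinate at time t of the token starting at x l: the leader x_(2j)
   rides up to x_(2j+1) - 1, the follower x_(2j+1) steps down onto it at time
   x_(2j+1) + N - k, and an unpaired last token stays put. *)
Definition track l t : nat :=
  if odd l then (if t <= x l + N - k then x l else (x l).-1)%N
  else if (l.+1 < m)%N then minn (maxn t (x l)) (x l.+1).-1
  else x l.

Lemma track_step_leader (j : 'I_p) t :
  round_step t (track (2 * j) t)%:R = (track (2 * j) t.+1)%:R.
Proof.
have jm := pair_lt j; rewrite /track oddM andFb jm.
have xj := x_incr (2 * j); have xN := pos_ltN jm.
have [tj|jt] := boolP (t < x (2 * j))%N.
  have -> : (minn (maxn t (x (2 * j))) (x (2 * j).+1).-1 = x (2 * j))%N by lia.
  have -> : (minn (maxn t.+1 (x (2 * j))) (x (2 * j).+1).-1 = x (2 * j))%N by lia.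
  apply: round_step_fix; first by lia.
  - case/existsP => i /andP[h1 h2]; split; apply/eqP => e; first by lia.
    by have := ltn_pos (2 * i) (2 * j); have := ltn_pos (2 * j) (2 * i).+1; lia.
  - move=> i _; apply/eqP => e.
    by have := leq_pos (2 * j) (2 * i).+1; have := leq_pos (2 * i).+1 (2 * j); lia.
have [tj1|j1t] := boolP (t.+1 < x (2 * j).+1)%N.
  have -> : (minn (maxn t (x (2 * j))) (x (2 * j).+1).-1 = t)%N by lia.
  have -> : (minn (maxn t.+1 (x (2 * j))) (x (2 * j).+1).-1 = t.+1)%N by lia.
  by apply: (@round_step_ride j); lia.
have -> : (minn (maxn t (x (2 * j))) (x (2 * j).+1).-1 = (x (2 * j).+1).-1)%N by lia.
have -> : (minn (maxn t.+1 (x (2 * j))) (x (2 * j).+1).-1 = (x (2 * j).+1).-1)%N by lia.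
apply: round_step_fix; first by lia.
- case/existsP => i /andP[h1 h2]; split; apply/eqP => e; last by lia.
  by have := ltn_pos (2 * i) (2 * j).+1; have := ltn_pos (2 * j).+1 (2 * i).+1; lia.
- move=> i _; apply/eqP => e.
  by have := leq_pos (2 * j) (2 * i).+1; have := ltn_pos (2 * i).+1 (2 * j).+1; lia.
Qed.

Lemma track_step_follower (j : 'I_p) t :
  round_step t (track (2 * j).+1 t)%:R = (track (2 * j).+1 t.+1)%:R.
Proof.
rewrite /track /= oddM andFb /=.
have xj := x_incr (2 * j); have xN := pair_ltN j.
have [ts|st|->] := ltngtP t (x (2 * j).+1 + N - k).
- apply: round_step_fix => // [|i ti].
    case/existsP => i /andP[h1 h2]; split; apply/eqP => e;
    by have := leq_pos (2 * i) (2 * j).+1; have := ltn_pos (2 * j).+1 (2 * i).+1; lia.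
  by apply/eqP => e; move: ts; rewrite ti e ltnn.
- apply: round_step_fix => [|_|i ti]; first by lia.
    by split; apply/eqP; lia.
  apply/eqP => e; move: st; rewrite ti -e; lia.
- exact: round_step_merge.
Qed.

Lemma track_step_unpaired j t : (2 * j < m)%N -> ~~ ((2 * j).+1 < m)%N ->
  round_step t (track (2 * j) t)%:R = (track (2 * j) t.+1)%:R.
Proof.
move=> jm jm1; rewrite /track oddM andFb (negbTE jm1).
apply: round_step_fix; first exact: pos_ltN.
- case/existsP => i /andP[h1 h2]; split; apply/eqP => e;
  by have := ltn_pos (2 * j) (2 * i).+1; have := pair_lt i; lia.
- move=> i _; apply/eqP => e.
  by have := leq_pos (2 * j) (2 * i).+1; have := leq_pos (2 * i).+1 (2 * j); lia.
Qed.

Lemma track_step l t :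
  (l < m)%N -> round_step t (track l t)%:R = (track l t.+1)%:R.
Proof.
have mE := odd_double_half m; rewrite -mul2n in mE.
have [j [->|->]] := half_cases l => lm.
  have [jp|jp] := boolP (j < p)%N; first exact: (track_step_leader (Ordinal jp)).
  by apply: track_step_unpaired => //; lia.
have jp : (j < p)%N by lia.
exact: (track_step_follower (Ordinal jp)).
Qed.

Lemma frame_track l T : (l < m)%N ->
  frame 0 (sched_word ride_time merge_time T) (x l)%:R = (track l T)%:R.
Proof.
move=> lm; elim: T => [|T IHT]; last by rewrite frame_sched_S IHT; apply: track_step.
rewrite /track /=; case: ifP => // _; case: ifP => // _.
by congr _%:R; have := x_incr l; lia.
Qed.

Definition next_pos j : nat := if (j < p)%N then (x (2 * j).+1).-1 else x (2 * j).

Lemma track_final l : (l < m)%N -> track l (2 * N) = next_pos l./2.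
Proof.
have mE := odd_double_half m; rewrite -mul2n in mE.
have [j [->|->]] := half_cases l => lm; rewrite /track /next_pos.
  rewrite oddM andFb !mul2n doubleK.
  case: ifP => h1; case: ifP => h2; try lia.
  by have := pos_ltN h1; lia.
have xN := pos_ltN lm; rewrite /= oddM andFb /= !mul2n uphalf_double in lm xN *.
rewrite ifF; last by lia.
by rewrite ifT //; lia.
Qed.

Lemma next_pos_incr j : (next_pos j < next_pos j.+1)%N.
Proof.
rewrite /next_pos mulnS add2n; have := x_incr (2 * j); have := x_incr (2 * j).+1.
by have := x_incr (2 * j).+2; case: ifP; case: ifP; lia.
Qed.

Lemma next_pos_last : (next_pos (uphalf m).-1 <= x m.-1)%N.
Proof.
rewrite /next_pos uphalf_half; have := odd_double_half m; rewrite -mul2n.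
case: (odd m) => /= mE.
  by rewrite ltnn leq_pos; lia.
case: ifP => h; last by rewrite leq_pos; lia.
by apply: leq_trans (leq_pred _) _; rewrite leq_pos; lia.
Qed.

Lemma cb_act_round l : (l < m)%N ->
  cb_act N k (K - (x l)%:R) round_word = K - (next_pos l./2)%:R.
Proof.
move=> lm; have := cb_act_sched ride_time merge_time (2 * N) (subrK (x l)%:R K).
rewrite frame_track // track_final // natrM pchar_Zp // mulr0 addr0.
exact: canRL (addrK _).
Qed.

End Round.

Lemma cb_rounds r : exists (x : nat -> nat) (w : seq letter),
  [/\ forall l, (x l < x l.+1)%N, (x (iter r uphalf N).-1 < N)%N,
      (size w <= 3 * N * r)%N &
      forall q, exists2 l, (l < iter r uphalf N)%N & cb_act N k q w = K - (x l)%:R].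
Proof.
elim: r => [|r [x [w [x_incr x_last_ltN size_w reach]]]].
  exists id, [::]; split=> // q; exists (val (K - q)); first exact: ltn_ord.
  by rewrite natr_Zp opprB addrC subrK.
set m := iter r uphalf N in x_last_ltN reach *.
exists (next_pos m x), (w ++ round_word m x); rewrite iterS; split.
- exact: next_pos_incr.
- exact: leq_ltn_trans (next_pos_last x_incr x_last_ltN) x_last_ltN.
- by rewrite size_cat mulnS; have := size_round_word x_incr x_last_ltN; lia.
move=> q; have [l lm qw] := reach q; exists l./2.
  rewrite gtn_uphalf_double; apply: leq_ltn_trans lm.
  by rewrite -{2}[l]odd_double_half leq_addl.
by rewrite cb_act_cat qw (cb_act_round x_incr x_last_ltN lm).
Qed.

Lemma cb_reset_word : exists w, is_reset_word N k w /\ (size w <= 3 * N * up_log 2 N)%N.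
Proof.
have [x [w [_ _ size_w reach]]] := cb_rounds (up_log 2 N).
have m_le1 := iter_uphalf_le1 (up_logP N (ltnSn 1)).
exists w; split=> //; rewrite /is_reset_word.
suff -> : cb_image N k w = [set K - (x 0%N)%:R] by rewrite cards1.
apply/setP => q; rewrite inE; apply/imsetP/eqP => [[q' _ ->]|->].
  by have [l lm ->] := reach q'; have -> : l = 0%N by lia.
have [l lm e] := reach 0; exists 0 => //; rewrite e.
by have -> : l = 0%N by lia.
Qed.

End CernyBinary.

Theorem theorem1 (n k : nat) (hn : 2 <= n) (hk1 : 1 <= k) (hk2 : k <= n - 1) :
  exists w : seq letter,
    is_reset_word n k w /\ size w <= 4 * n * up_log 2 n.
Proof.
case: n hn hk2 => [|[|n]] // _ hk2.
have kN : k < n.+2 by lia.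
have [w [reset_w size_w]] := cb_reset_word hk1 kN.
exists w; split=> //; apply: leq_trans size_w _.
by rewrite leq_mul2r leq_mul2r orbT.
Qed.
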